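(* Let $R$ be a real $n\times n$ payoff matrix, let $S,F$ be $n\times n$ row-stochastic matrices, and for $\lambda\in[0,1]$ set $Q(\lambda)=(1-\lambda)S+\lambda F$, $R(\lambda)=Q(\lambda)RQ(\lambda)^T$ and $\tilde R(\lambda)=R(\lambda)-\mathbf d_{R(\lambda)}\mathbf u^T$, where $\mathbf d_{R(\lambda)}$ is the column vector of diagonal entries of $R(\lambda)$ and $\mathbf u$ is the all-ones column vector. Consider the replicator dynamics on the simplex $\{x\in\mathbb R^n: x_i\ge0,\ \sum_ix_i=1\}$, $$\dot x_i=x_i\big((\tilde R(\lambda)x)_i-x^T\tilde R(\lambda)x\big),\quad i=1,\dots,n,$$ with mean fitness $\phi(x,\lambda)=x^T\tilde R(\lambda)x$. Let $\tilde{\mathbf x}$ be an interior fixed point of these dynamics at parameter value $\lambda^c\in[0,1]$, i.e. $\tilde x_i>0$ for all $i$, and suppose $\lambda^c$ is a balanced bifurcation parameter value of $\tilde{\mathbf x}$, i.e. $\phi(\tilde{\mathbf x},\lambda^c)=0$. Then $\det\tilde R(\lambda^c)=0$.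
   Context: A value $\lambda\in[0,1]$ with $\det\tilde R(\lambda)=0$ is called a singular point of the incompetent game $\tilde R(\lambda)$. $Q(\lambda)$ is the incompetence matrix ($(i,j)$ entry = probability of executing strategy $j$ when strategy $i$ is selected). *)

From mathcomp Require Import all_boot all_order all_algebra.
Set Implicit Arguments. Unset Strict Implicit. Unset Printing Implicit Defensive.
Import Order.TTheory GRing.Theory Num.Theory.
Local Open Scope ring_scope.

Section Incompetent.
Variables (K : realFieldType) (n : nat).

Definition row_stochastic (A : 'M[K]_n) : Prop :=
  (forall i j, 0 <= A i j) /\ (forall i, \sum_(j < n) A i j = 1).

Definition incompQ (S F : 'M[K]_n) (lam : K) : 'M[K]_n :=
  (1 - lam) *: S + lam *: F.

Definition incompR (R S F : 'M[K]_n) (lam : K) : 'M[K]_n :=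
  incompQ S F lam *m R *m (incompQ S F lam)^T.

Definition incompRt (R S F : 'M[K]_n) (lam : K) : 'M[K]_n :=
  let M := incompR R S F lam in
  M - (\col_i M i i) *m (\row_(j < n) (1 : K)).

Definition mean_fitness (R S F : 'M[K]_n) (x : 'cV[K]_n) (lam : K) : K :=
  (x^T *m incompRt R S F lam *m x) ord0 ord0.

Definition in_simplex (x : 'cV[K]_n) : Prop :=
  (forall i, 0 <= x i ord0) /\ \sum_(i < n) x i ord0 = 1.

Definition replicator_fixed (R S F : 'M[K]_n) (x : 'cV[K]_n) (lam : K) : Prop :=
  forall i, x i ord0 * ((incompRt R S F lam *m x) i ord0
                        - mean_fitness R S F x lam) = 0.

End Incompetent.

From mathcomp Require Import all_boot all_order all_algebra.
Import Order.TTheory GRing.Theory Num.Theory.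
Local Open Scope ring_scope.
Set Implicit Arguments. Unset Strict Implicit. Unset Printing Implicit Defensive.

(** At an interior fixed point every strategy earns the mean fitness, so a
    balanced fixed point [x] satisfies [tilde R x = 0]; being a probability
    vector, [x] is nonzero, hence [tilde R] is singular. No property of
    [S], [F] or [lambda] is needed. *)

Lemma det_mulmx_col_eq0 (K : fieldType) (n : nat) (A : 'M[K]_n) (v : 'cV[K]_n) :
  v != 0 -> A *m v = 0 -> \det A = 0.
Proof.
move=> v_neq0 Av0; rewrite -det_tr; apply/eqP/det0P.
by exists v^T; rewrite ?trmx_eq0 // -trmx_mul Av0 trmx0.
Qed.

Lemma cV_sum_eq1_neq0 (K : nzRingType) (n : nat) (x : 'cV[K]_n) :
  \sum_(i < n) x i ord0 = 1 -> x != 0.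
Proof.
move=> sum1; apply: contra_eq_neq sum1 => ->.
by rewrite big1 => [|i _]; rewrite ?mxE // eq_sym oner_neq0.
Qed.

Lemma in_simplex_neq0 (K : realFieldType) (n : nat) (x : 'cV[K]_n) :
  in_simplex x -> x != 0.
Proof. by case=> _; apply: cV_sum_eq1_neq0. Qed.

Lemma replicator_fixed_interior_payoff (K : realFieldType) (n : nat)
    (R S F : 'M[K]_n) (x : 'cV[K]_n) (lam : K) :
  (forall i, 0 < x i ord0) -> replicator_fixed R S F x lam ->
  incompRt R S F lam *m x = const_mx (mean_fitness R S F x lam).
Proof.
move=> x_gt0 fixed_x; apply/matrixP => i j; rewrite (ord1 j) [RHS]mxE.
apply/eqP; rewrite -subr_eq0.
by move/eqP: (fixed_x i); rewrite mulf_eq0 gt_eqF.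
Qed.

Theorem lemma2 (K : realFieldType) (n : nat) (R S F : 'M[K]_n)
  (x : 'cV[K]_n) (lamc : K) :
  row_stochastic S -> row_stochastic F ->
  0 <= lamc <= 1 ->
  in_simplex x ->
  (forall i, 0 < x i ord0) ->
  replicator_fixed R S F x lamc ->
  mean_fitness R S F x lamc = 0 ->
  \det (incompRt R S F lamc) = 0.
Proof.
move=> _ _ _ x_simplex x_gt0 fixed_x balanced.
apply: (det_mulmx_col_eq0 (in_simplex_neq0 x_simplex)).
by rewrite (replicator_fixed_interior_payoff x_gt0 fixed_x) balanced.
Qed.
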